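(* Let $\mathbb{H}$ be a real Hilbert space (of dimension at least $2$) and let $\mathbb{X},\mathbb{Y}$ be two-dimensional strictly convex smooth real Banach spaces. Let $T$ be a rank one operator either in $\mathbb{L}(\mathbb{H},\mathbb{Y})$ or in $\mathbb{L}(\mathbb{X},\mathbb{H})$, with $\|T\|=1$. If $x\in M_T$ is such that $(x,Tx)$ is not a CPP, then $T$ is an extreme contraction.
   Context: $M_T=\{x \text{ in the unit sphere of the domain}:\|Tx\|=\|T\|\}$. A norm one operator is an extreme contraction if it is an extreme point of the closed unit ball of the space of bounded linear operators between the given spaces. $B(x,r)=\{u:\|u-x\|<r\}$. $x\perp_B y$ means $\|x+\lambda y\|\ge\|x\|$ for all real $\lambda$; $x^\perp=\{y:x\perp_By\}$. For $x$ in the unit sphere $S_{\mathbb{U}}$ of $\mathbb{U}$ and $y\in S_{\mathbb{V}}$, $(x,y)$ is a CPP if there exist $r>0,\mu>0$ such that for all $z\in x^\perp\cap S_{\mathbb{U}}$, all $w\in y^\perp\cap S_{\mathbb{V}}$ and all $a,b\in\mathbb{R}$, $ax+bz\in B(x,r)\cap S_{\mathbb{U}}$ implies $\|ay+b\mu w\|\le1$. *)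

From HB Require Import structures.
From mathcomp Require Import all_boot all_order all_algebra.
From mathcomp Require Import all_classical all_reals all_analysis.
Set Implicit Arguments. Unset Strict Implicit. Unset Printing Implicit Defensive.
Import Order.TTheory GRing.Theory Num.Theory.
Import numFieldNormedType.Exports.
Local Open Scope classical_set_scope.
Local Open Scope ring_scope.

Section Defs.
Variable R : realType.

Definition is_linear (U V : normedModType R) (T : U -> V) : Prop :=
  forall (a : R) (u v : U), T (a *: u + v) = a *: T u + T v.

Definition bounded_linear (U V : normedModType R) (T : U -> V) : Prop :=
  is_linear T /\ exists C : R, forall x, `|T x| <= C * `|x|.

Definition opnorm (U V : normedModType R) (T : U -> V) : R :=
  sup [set `|T x| | x in [set x : U | `|x| = 1]].

Definition rank_one (U V : normedModType R) (T : U -> V) : Prop :=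
  (exists x, T x != 0) /\
  exists v : V, forall x, exists c : R, T x = c *: v.

Definition norm_attainment_set (U V : normedModType R) (T : U -> V) : set U :=
  [set x | `|x| = 1 /\ `|T x| = opnorm T].

Definition extreme_contraction (U V : normedModType R) (T : U -> V) : Prop :=
  opnorm T = 1 /\
  forall (A B : U -> V) (t : R),
    bounded_linear A -> bounded_linear B ->
    opnorm A <= 1 -> opnorm B <= 1 ->
    0 < t < 1 -> T = (fun x => t *: A x + (1 - t) *: B x) ->
    A = T /\ B = T.

Definition oball (U : normedModType R) (x : U) (r : R) : set U :=
  [set u | `|u - x| < r].

Definition bj_orth (U : normedModType R) (x y : U) : Prop :=
  forall lambda : R, `|x| <= `|x + lambda *: y|.

Definition sphere (U : normedModType R) : set U := [set x | `|x| = 1].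

Definition CPP (U V : normedModType R) (x : U) (y : V) : Prop :=
  exists r mu : R, 0 < r /\ 0 < mu /\
    forall (z : U) (w : V) (a b : R),
      bj_orth x z -> `|z| = 1 -> bj_orth y w -> `|w| = 1 ->
      (a *: x + b *: z) \in oball x r `&` @sphere U ->
      `|a *: y + (b * mu) *: w| <= 1.

Definition strictly_convex (U : normedModType R) : Prop :=
  forall x y : U, `|x| = 1 -> `|y| = 1 -> x != y -> `|x + y| < 2.

Definition norming_functional (U : normedModType R) (x : U) (f : U -> R) :=
  (forall (a : R) (u v : U), f (a *: u + v) = a * f u + f v) /\
  (forall y, `|f y| <= `|y|) /\ f x = 1.

Definition smooth (U : normedModType R) : Prop :=
  forall x : U, `|x| = 1 ->
    forall f g, norming_functional x f -> norming_functional x g -> f = g.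

Definition lin_indep2 (U : normedModType R) (u v : U) : Prop :=
  forall a b : R, a *: u + b *: v = 0 -> a = 0 /\ b = 0.

Definition dim_two (U : normedModType R) : Prop :=
  exists u v : U, lin_indep2 u v /\
    forall x : U, exists a b : R, x = a *: u + b *: v.

(* real Hilbert space structure on a complete normed space: an inner product
   inducing the norm *)
Definition inner_product_for (H : normedModType R) (ip : H -> H -> R) : Prop :=
  (forall x y, ip x y = ip y x) /\
  (forall (a : R) (x y z : H), ip (a *: x + y) z = a * ip x z + ip y z) /\
  (forall x, ip x x = `|x| ^+ 2).

End Defs.

(* Suppose T = t A + (1 - t) B with A, B in the closed unit ball. Since the
   codomain is strictly convex (a Hilbert space is, by the parallelogram law),
   A x = B x = T x; so it suffices that every contraction C with C x = T x
   factors as C = g(.) T x for a functional g depending only on x.  Failure of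
   the CPP at (x, T x) yields, for every mu > 0, a unit vector w _|_B T x and a
   unit vector a x + b z with z _|_B x such that || a T x + b mu w || > 1.
   If H is the domain, take u _|_ x of norm one and mu = || C u ||: C u has no
   T x-component, so C maps a x +/- b u, again of norm one, to a T x + b mu w;
   hence C u = 0 and C = <., x> T x.  If H is the codomain, smoothness makes
   <C ., T x> the unique support functional f at x and x^_|_B the line ker f;
   the same argument with z in that line gives C z = 0, whence C = f(.) T x. *)

From HB Require Import structures.
From mathcomp Require Import all_boot all_order all_algebra.
From mathcomp Require Import all_classical all_reals all_analysis.
From mathcomp Require Import ring lra.
Import Order.TTheory GRing.Theory Num.Theory.
Import numFieldNormedType.Exports.
Local Open Scope classical_set_scope.
Local Open Scope ring_scope.

Section ExtremeContractions.
Local Set Implicit Arguments.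
Local Unset Strict Implicit.
Variable R : realType.

Section LinearMaps.
Variables (U V : normedModType R) (A : U -> V).
Hypothesis LA : is_linear A.

Lemma is_linear0 : A 0 = 0.
Proof.
have := LA 1 0 0; rewrite !scale1r addr0 => /(congr1 (fun v => v - A 0)).
by rewrite /= subrr addrK => /esym.
Qed.

Lemma is_linearZ a u : A (a *: u) = a *: A u.
Proof. by have := LA a u 0; rewrite addr0 is_linear0 addr0. Qed.

Lemma is_linearD u v : A (u + v) = A u + A v.
Proof. by have := LA 1 u v; rewrite !scale1r. Qed.

Lemma is_linearDZ a b u v : A (a *: u + b *: v) = a *: A u + b *: A v.
Proof. by rewrite is_linearD !is_linearZ. Qed.

End LinearMaps.

Lemma opnorm_le1_norm_le (U V : normedModType R) (A : U -> V) :
  bounded_linear A -> opnorm A <= 1 -> forall h, `|A h| <= `|h|.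
Proof.
move=> [LA [C AC]] A1 h.
have [->|h0] := eqVneq h 0; first by rewrite is_linear0 // !normr0.
have hgt0 : 0 < `|h| by rewrite normr_gt0.
pose e := `|h|^-1 *: h.
have ne1 : `|e| = 1 by rewrite normrZ ger0_norm ?invr_ge0 // mulVf // gt_eqF.
have : `|A e| <= 1.
  apply: le_trans A1; apply: ub_le_sup; last by exists e.
  by exists C => _ [u /= u1 <-]; rewrite -[C]mulr1 -u1.
by rewrite (is_linearZ LA) normrZ ger0_norm ?invr_ge0 // ler_pdivrMl // mulr1.
Qed.

Section TwoDimensional.
Variable U : normedModType R.

Lemma bj_orth_norm_ge (y w : U) c d :
  `|y| = 1 -> bj_orth y w -> `|c| <= `|c *: y + d *: w|.
Proof.
move=> ny yw; have [->|c0] := eqVneq c 0; first by rewrite normr0.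
have -> : c *: y + d *: w = c *: (y + (d / c) *: w).
  by rewrite scalerDr scalerA mulrC divfK.
by rewrite normrZ -{1}[`|c|]mulr1 ler_wpM2l // -ny.
Qed.

Lemma bj_orth_lin_indep2 (y w : U) :
  y != 0 -> w != 0 -> bj_orth y w -> lin_indep2 y w.
Proof.
move=> y0 w0 yw c d cd0.
have [d0|d0] := eqVneq d 0.
  move/eqP: cd0; rewrite d0 scale0r addr0 scaler_eq0 (negbTE y0) orbF.
  by move/eqP.
exfalso; have [c0|c0] := eqVneq c 0.
  move/eqP: cd0; rewrite c0 scale0r add0r scaler_eq0 (negbTE w0) orbF.
  by rewrite (negbTE d0).
have ew : w = (- (c / d)) *: y.
  apply: (scalerI d0); rewrite scalerA mulrN mulrCA mulfV // mulr1 scaleNr.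
  by apply/eqP; rewrite -addr_eq0 addrC cd0.
have := yw (d / c).
rewrite ew scalerA mulrN mulrA divfK // mulfV // scaleN1r subrr normr0.
by rewrite normr_le0 (negbTE y0).
Qed.

Lemma scale_comb2 (u1 u2 : U) a b p q r s :
  a *: (p *: u1 + q *: u2) + b *: (r *: u1 + s *: u2)
  = (a * p + b * r) *: u1 + (a * q + b * s) *: u2.
Proof. by rewrite !scalerDr !scalerA !scalerDl addrACA. Qed.

Lemma dim_two_span (y w : U) : dim_two U -> lin_indep2 y w ->
  forall v, exists a b, v = a *: y + b *: w.
Proof.
move=> [u1 [u2 [_ span_u]]] yw.
have [p [q ey]] := span_u y; have [r [s ew]] := span_u w.
pose D := p * s - q * r.
have D0 : D != 0.
  apply/eqP => D0.
  have [_ q0] : s = 0 /\ - q = 0.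
    apply: yw; rewrite ey ew scale_comb2.
    have -> : s * p + - q * r = D by rewrite /D; ring.
    have -> : s * q + - q * s = 0 by ring.
    by rewrite D0 !scale0r addr0.
  have [_ p0] : - r = 0 /\ p = 0.
    apply: yw; rewrite ey ew scale_comb2.
    have -> : - r * p + p * r = 0 by ring.
    have -> : - r * q + p * s = D by rewrite /D; ring.
    by rewrite D0 !scale0r addr0.
  have [] := yw 1 0; last by move/eqP; rewrite oner_eq0.
  by rewrite ey p0 -[q]opprK q0 oppr0 !scale0r !addr0 scaler0.
have e1 : u1 = (s / D) *: y + (- q / D) *: w.
  rewrite ey ew scale_comb2.
  have -> : s / D * p + - q / D * r = 1 by rewrite /D; field.
  have -> : s / D * q + - q / D * s = 0 by field.
  by rewrite scale1r scale0r addr0.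
have e2 : u2 = (- r / D) *: y + (p / D) *: w.
  rewrite ey ew scale_comb2.
  have -> : - r / D * p + p / D * r = 0 by field.
  have -> : - r / D * q + p / D * s = 1 by rewrite /D; field.
  by rewrite scale1r scale0r add0r.
move=> v; have [m [n ->]] := span_u v.
by rewrite e1 e2 scale_comb2; do 2 eexists.
Qed.

Lemma bj_orth_coord_functional (x z : U) : dim_two U -> `|x| = 1 -> z != 0 ->
  bj_orth x z -> exists f : U -> R, [/\ norming_functional x f, f z = 0 &
    forall h, exists d, h = f h *: x + d *: z].
Proof.
move=> d2 nx z0 xz.
have x0 : x != 0 by rewrite -normr_eq0 nx oner_eq0.
have xz_indep := bj_orth_lin_indep2 x0 z0 xz.
have [f fP] := choice (dim_two_span d2 xz_indep).
have coordE c d h : h = c *: x + d *: z -> f h = c.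
  move=> eh; have [d' ed'] := fP h.
  have : (f h - c) *: x + (d' - d) *: z = 0.
    by rewrite !scalerBl addrACA -opprD -ed' -eh subrr.
  by case/xz_indep => /eqP; rewrite subr_eq0 => /eqP.
exists f; split => //; last by apply: (coordE _ 1); rewrite scale0r add0r scale1r.
split; [|split].
- move=> a u v; have [du eu] := fP u; have [dv ev] := fP v.
  apply: (coordE _ (a * du + dv)).
  by rewrite {1}eu {1}ev scalerDr !scalerA !scalerDl addrACA.
- by move=> h; have [d ed] := fP h; rewrite {2}ed; apply: bj_orth_norm_ge.
- by apply: (coordE _ 0); rewrite scale1r scale0r addr0.
Qed.

Lemma smooth_bj_orth_collinear (x z z' : U) : dim_two U -> smooth U ->
  `|x| = 1 -> z != 0 -> bj_orth x z -> bj_orth x z' -> exists d, z' = d *: z.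
Proof.
move=> d2 sm nx z0 xz xz'.
have [->|z'0] := eqVneq z' 0; first by exists 0; rewrite scale0r.
have [f [nf _ fP]] := bj_orth_coord_functional d2 nx z0 xz.
have [f' [nf' f'z' _]] := bj_orth_coord_functional d2 nx z'0 xz'.
have [d ed] := fP z'; exists d.
by rewrite {1}ed (sm x nx f f' nf nf') f'z' scale0r add0r.
Qed.

End TwoDimensional.

Lemma not_CPP_witness (U V : normedModType R) (x : U) (y : V) : ~ CPP x y ->
  forall r mu : R, 0 < r -> 0 < mu -> exists z w (a b : R),
    [/\ bj_orth x z, `|z| = 1, bj_orth y w, `|w| = 1 &
      `|a *: x + b *: z| = 1 /\ 1 < `|a *: y + (b * mu) *: w|].
Proof.
move=> nCPP r mu r0 mu0; apply: contrapT => none; apply: nCPP.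
exists r, mu; do 2 split => //; move=> z w a b xz nz yw nw.
rewrite in_setE => -[_ nab]; rewrite leNgt; apply/negP => gt1; apply: none.
by exists z, w, a, b.
Qed.

Section StrictConvexity.
Variables (U : normedModType R) (sc : strictly_convex U).

Lemma strictly_convex_comb_lt1 (p q : U) t : `|p| = 1 -> `|q| = 1 -> p != q ->
  0 < t < 1 -> `|t *: p + (1 - t) *: q| < 1.
Proof.
wlog t_small : p q t / t <= 1 / 2 => [wlog_t np nq pq t01|np nq pq /andP[t0 t1]].
  have [t_small|t_big] := lerP t (1 / 2); first exact: wlog_t t_small np nq pq t01.
  have -> : t *: p + (1 - t) *: q = (1 - t) *: q + (1 - (1 - t)) *: p.
    by rewrite addrC opprB addrCA subrr addr0.
  by apply: wlog_t; rewrite // 1?eq_sym //; lra.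
have -> : t *: p + (1 - t) *: q = t *: (p + q) + (1 - 2 * t) *: q.
  by rewrite scalerDr -addrA -scalerDl; congr (_ + _ *: _); ring.
apply: le_lt_trans (ler_normD _ _) _.
rewrite !normrZ (ger0_norm (ltW t0)) (@ger0_norm _ (1 - 2 * t)) ?nq; last lra.
have : t * `|p + q| < t * 2 by rewrite ltr_pM2l // sc.
lra.
Qed.

Lemma strictly_convex_comb_eq (p q : U) t : `|p| <= 1 -> `|q| <= 1 ->
  0 < t < 1 -> `|t *: p + (1 - t) *: q| = 1 -> p = q.
Proof.
move=> p1 q1 t01 n1; have /andP[t0 t1] := t01.
have tri : 1 <= t * `|p| + (1 - t) * `|q|.
  rewrite -[X in X <= _]n1; apply: le_trans (ler_normD _ _) _.
  by rewrite !normrZ !ger0_norm //; lra.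
have tp : t * `|p| <= t by rewrite ler_piMr // ltW.
have tq : (1 - t) * `|q| <= 1 - t by rewrite ler_piMr // subr_ge0 ltW.
have np : `|p| = 1.
  apply/le_anti; rewrite p1 -(ler_pM2l t0) mulr1; lra.
have nq : `|q| = 1.
  apply/le_anti; rewrite q1 -(ler_pM2l (_ : 0 < 1 - t)) ?mulr1; lra.
have [//|pq] := eqVneq p q.
by have := strictly_convex_comb_lt1 np nq pq t01; rewrite n1 ltxx.
Qed.

End StrictConvexity.

Lemma extreme_contraction_of_rigid (U V : normedModType R) (T : U -> V) x
    (g : U -> R) :
  strictly_convex V -> bounded_linear T -> opnorm T = 1 ->
  `|x| = 1 -> `|T x| = 1 ->
  (forall A, is_linear A -> (forall h, `|A h| <= `|h|) -> A x = T x ->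
     forall h, A h = g h *: T x) ->
  extreme_contraction T.
Proof.
move=> sc bT nT nx nTx rigid; split => // A B t bA bB nA nB t01 eT.
have A1 := opnorm_le1_norm_le bA nA; have B1 := opnorm_le1_norm_le bB nB.
have T1 : forall h, `|T h| <= `|h| by apply: (opnorm_le1_norm_le bT); rewrite nT.
have eTx : T x = t *: A x + (1 - t) *: B x by rewrite eT.
have ABx : A x = B x.
  by apply: (strictly_convex_comb_eq sc _ _ t01); rewrite -?eTx // -nx ?A1 ?B1.
have Ax : A x = T x by rewrite eTx -ABx -scalerDl addrC subrK scale1r.
have Bx : B x = T x by rewrite -ABx.
have TE := rigid T bT.1 T1 erefl.
have AE := rigid A bA.1 A1 Ax; have BE := rigid B bB.1 B1 Bx.
by split; apply/funext => h; rewrite TE ?AE ?BE.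
Qed.

Section InnerProduct.
Variables (H : normedModType R) (ip : H -> H -> R).
Hypothesis Hip : inner_product_for ip.

Lemma ipC u v : ip u v = ip v u.
Proof. by case: Hip. Qed.

Lemma ipxx u : ip u u = `|u| ^+ 2.
Proof. by case: Hip => _ []. Qed.

Lemma ipDl u v w : ip (u + v) w = ip u w + ip v w.
Proof. by case: Hip => _ [ipL _]; have := ipL 1 u v w; rewrite scale1r mul1r. Qed.

Lemma ipZl a u w : ip (a *: u) w = a * ip u w.
Proof.
have ip0 : ip 0 w = 0.
  by apply: (@addrI _ (ip 0 w)); rewrite -ipDl !addr0.
by case: Hip => _ [ipL _]; have := ipL a u 0 w; rewrite addr0 ip0 addr0.
Qed.

Lemma sqr_norm_comb a b u v :
  `|a *: u + b *: v| ^+ 2 = a ^+ 2 * `|u| ^+ 2 + 2 * a * b * ip u v + b ^+ 2 * `|v| ^+ 2.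
Proof.
rewrite -ipxx !ipDl !ipZl ![ip _ (_ + _)]ipC !ipDl !ipZl !ipxx (ipC v u); ring.
Qed.

Lemma bj_orth_ip0 u v : `|v| = 1 -> bj_orth u v -> ip u v = 0.
Proof.
move=> nv uv; have := uv (- ip u v).
have := sqr_norm_comb 1 (- ip u v) u v; rewrite scale1r nv => E uv_le.
have := normr_ge0 u => u_ge0.
have : ip u v ^+ 2 <= 0 by nra.
by rewrite le_eqVlt ltNge sqr_ge0 orbF sqrf_eq0 => /eqP.
Qed.

Lemma ip_unit_le u v : `|v| = 1 -> `|ip u v| <= `|u|.
Proof.
move=> nv; have := sqr_norm_comb 1 (- ip u v) u v; rewrite nv => E.
have := sqr_ge0 `|1 *: u + (- ip u v) *: v|; rewrite E => E_ge0.
have := real_normK (num_real (ip u v)) => Ec.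
by have := normr_ge0 u; have := normr_ge0 (ip u v); nra.
Qed.

Lemma inner_product_strictly_convex : strictly_convex H.
Proof.
move=> p q np nq pq.
have := sqr_norm_comb 1 1 p q; have := sqr_norm_comb 1 (-1) p q.
rewrite !scale1r scaleN1r np nq => Em Ep.
have : 0 < `|p - q| by rewrite normr_gt0 subr_eq0.
by have := normr_ge0 (p + q); nra.
Qed.

End InnerProduct.

Section FromHilbert.
Variables (H Y : normedModType R) (ip : H -> H -> R).
Hypotheses (Hip : inner_product_for ip) (d2Y : dim_two Y).
Variables (x : H) (y : Y).
Hypotheses (nx : `|x| = 1) (ny : `|y| = 1) (nCPP : ~ CPP x y).
Variable A : H -> Y.
Hypotheses (LA : is_linear A) (A1 : forall h, `|A h| <= `|h|) (Ax : A x = y).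

Lemma contraction_orth_coef0 u w al be : ip u x = 0 -> `|u| = 1 ->
  bj_orth y w -> A u = al *: y + be *: w -> al = 0.
Proof.
move=> ux nu yw Au.
have E : A (1 *: x + al *: u) = (1 + al ^+ 2) *: y + (al * be) *: w.
  by rewrite (is_linearDZ LA) Ax Au scalerDr !scalerA addrA scalerDl !scale1r expr2.
have := bj_orth_norm_ge (1 + al ^+ 2) (al * be) ny yw.
rewrite -E ger0_norm ?addr_ge0 ?sqr_ge0 // => ge.
have := le_trans ge (A1 _); have := sqr_norm_comb Hip 1 al x u.
rewrite nx nu (ipC Hip) ux => Nxu le.
have := normr_ge0 (1 *: x + al *: u) => N_ge0.
have : al ^+ 2 <= 0 by nra.
by rewrite le_eqVlt ltNge sqr_ge0 orbF sqrf_eq0 => /eqP.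
Qed.

Lemma contraction_orth0 u : ip u x = 0 -> `|u| = 1 -> A u = 0.
Proof.
move=> ux nu; apply/eqP; apply: contraT => Au0.
have mu_gt0 : 0 < `|A u| by rewrite normr_gt0.
have [z [w [a [b [xz nz yw nw [nab gt1]]]]]] := not_CPP_witness nCPP ltr01 mu_gt0.
have y0 : y != 0 by rewrite -normr_eq0 ny oner_eq0.
have w0 : w != 0 by rewrite -normr_eq0 nw oner_eq0.
have [al [be Au]] := dim_two_span d2Y (bj_orth_lin_indep2 y0 w0 yw) (A u).
have al0 := contraction_orth_coef0 ux nu yw Au.
move: Au; rewrite al0 scale0r add0r => Au.
have nAu : `|A u| = `|be| by rewrite Au normrZ nw mulr1.
(* The sign of [be] turns the coefficient of [w] into [b * mu]. *)
have E : A (a *: x + (b * Num.sg be) *: u) = a *: y + (b * `|A u|) *: w.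
  by rewrite nAu (is_linearDZ LA) Ax Au scalerA -mulrA -normrEsg.
have ab : a ^+ 2 + b ^+ 2 = 1.
  have := sqr_norm_comb Hip a b x z.
  by rewrite nab nx nz (bj_orth_ip0 Hip nz xz); lra.
have := A1 (a *: x + (b * Num.sg be) *: u); rewrite E.
have := sqr_norm_comb Hip a (b * Num.sg be) x u.
have be0 : be != 0 by rewrite -normr_eq0 -nAu normr_eq0.
rewrite nx nu (ipC Hip) ux exprMn sqr_sg be0 mulr1 => N.
have := normr_ge0 (a *: x + (b * Num.sg be) *: u); nra.
Qed.

Lemma contraction_from_hilbertE h : A h = ip h x *: y.
Proof.
pose u := h - ip h x *: x.
have ux : ip u x = 0.
  by rewrite /u -scaleN1r (ipDl Hip) !(ipZl Hip) (ipxx Hip) nx; ring.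
have Au : A u = 0.
  have [->|u0] := eqVneq u 0; first exact: is_linear0.
  have nu_gt0 : 0 < `|u| by rewrite normr_gt0.
  have := @contraction_orth0 (`|u|^-1 *: u).
  rewrite (ipZl Hip) ux mulr0 normrZ ger0_norm ?invr_ge0 // mulVf ?gt_eqF //.
  rewrite (is_linearZ LA) => /(_ (erefl _) (erefl _)) /eqP.
  by rewrite scaler_eq0 invr_eq0 normr_eq0 (negbTE u0) => /eqP.
have -> : A h = A (ip h x *: x + u) by rewrite addrC subrK.
by rewrite (is_linearD LA) (is_linearZ LA) Au addr0 Ax.
Qed.

End FromHilbert.

Section ToHilbert.
Variables (X H : normedModType R) (ip : H -> H -> R).
Hypotheses (Hip : inner_product_for ip) (d2X : dim_two X) (smX : smooth X).
Variables (x : X) (y : H).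
Hypotheses (nx : `|x| = 1) (ny : `|y| = 1) (nCPP : ~ CPP x y).

Lemma ip_contraction_norming (A : X -> H) : is_linear A ->
  (forall h, `|A h| <= `|h|) -> A x = y -> norming_functional x (fun h => ip (A h) y).
Proof.
move=> LA A1 Ax; split; [|split].
- by move=> a u v; rewrite LA (ipDl Hip) (ipZl Hip).
- by move=> h; apply: le_trans (ip_unit_le Hip _ ny) (A1 h).
- by rewrite Ax (ipxx Hip) ny expr1n.
Qed.

Lemma contraction_bj_orth0 (A : X -> H) z : is_linear A ->
  (forall h, `|A h| <= `|h|) -> A x = y -> bj_orth x z -> `|z| = 1 -> A z = 0.
Proof.
move=> LA A1 Ax xz nz.
have z0 : z != 0 by rewrite -normr_eq0 nz oner_eq0.
have [f [nf fz _]] := bj_orth_coord_functional d2X nx z0 xz.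
have Azy : ip (A z) y = 0.
  by rewrite -fz -(smX nx (ip_contraction_norming LA A1 Ax) nf).
apply/eqP; apply: contraT => Az0.
have mu_gt0 : 0 < `|A z| by rewrite normr_gt0.
have [z' [w [a [b [xz' nz' yw nw [nab gt1]]]]]] := not_CPP_witness nCPP ltr01 mu_gt0.
have [d ez'] := smooth_bj_orth_collinear d2X smX nx z0 xz xz'.
have d2 : d ^+ 2 = 1.
  by move: nz'; rewrite ez' normrZ nz mulr1 -(real_normK (num_real d)) => ->; rewrite expr1n.
have N : `|A (a *: x + b *: z')| ^+ 2 = `|a *: y + (b * `|A z|) *: w| ^+ 2.
  rewrite ez' (is_linearDZ LA) (is_linearZ LA) Ax scalerA !(sqr_norm_comb Hip).
  by rewrite (ipC Hip) Azy (bj_orth_ip0 Hip nw yw) ny nw exprMn d2; ring.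
have := A1 (a *: x + b *: z'); rewrite nab => le1.
by have := normr_ge0 (A (a *: x + b *: z')); nra.
Qed.

Lemma contraction_to_hilbert_rigid : exists g : X -> R, forall A : X -> H,
  is_linear A -> (forall h, `|A h| <= `|h|) -> A x = y -> forall h, A h = g h *: y.
Proof.
have [z [_ [_ [_ [xz nz _ _ _]]]]] := not_CPP_witness nCPP ltr01 ltr01.
have z0 : z != 0 by rewrite -normr_eq0 nz oner_eq0.
have [f [_ _ fP]] := bj_orth_coord_functional d2X nx z0 xz.
exists f => A LA A1 Ax h; have [d ed] := fP h.
by rewrite {1}ed (is_linearDZ LA) Ax (contraction_bj_orth0 LA A1 Ax xz nz) scaler0 addr0.
Qed.

End ToHilbert.
End ExtremeContractions.

Theorem mainTheorem6 (R : realType)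
  (H : completeNormedModType R) (ip : H -> H -> R)
  (X Y : completeNormedModType R) :
  inner_product_for ip ->
  (exists u v : H, lin_indep2 u v) ->
  dim_two X -> strictly_convex X -> smooth X ->
  dim_two Y -> strictly_convex Y -> smooth Y ->
  (forall T : H -> Y,
     bounded_linear T -> rank_one T -> opnorm T = 1 ->
     forall x : H, norm_attainment_set T x -> ~ CPP x (T x) ->
     extreme_contraction T) /\
  (forall T : X -> H,
     bounded_linear T -> rank_one T -> opnorm T = 1 ->
     forall x : X, norm_attainment_set T x -> ~ CPP x (T x) ->
     extreme_contraction T).
Proof.
move=> Hip _ d2X _ smX d2Y scY _; split=> T bT _ nT x [nx]; rewrite nT => nTx nCPP.
- apply: (extreme_contraction_of_rigid (g := ip^~ x) scY bT nT nx nTx) => A LA A1 Ax.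
  exact: (contraction_from_hilbertE Hip d2Y nx nTx nCPP LA A1 Ax).
- have [g rigid] := contraction_to_hilbert_rigid Hip d2X smX nx nTx nCPP.
  exact: extreme_contraction_of_rigid (inner_product_strictly_convex Hip) bT nT nx nTx rigid.
Qed.
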